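(* Let $G$ be a finite simple graph and $vw$ an edge of $G$. Then $vw$ is exposed in $G$ if and only if $N_G(v)\cap N_G(w)$ is nonempty and induces a clique (complete subgraph) in $G$.
   Context: All graphs are finite, undirected, simple. $N_G(v)=\{w : vw\in E(G)\}$ is the open neighborhood. A facet edge of $G$ is an edge $xy$ such that $\{x,y\}$ is a maximal clique of $G$. An edge of $G$ is exposed if it is contained in a unique maximal clique of $G$ and it is not a facet edge. *)

From mathcomp Require Import all_boot.
Set Implicit Arguments. Unset Strict Implicit. Unset Printing Implicit Defensive.

Definition simple_graph (T : finType) (e : rel T) : Prop :=
  symmetric e /\ irreflexive e.

Definition nbhd (T : finType) (e : rel T) (v : T) : {set T} := [set w | e v w].

Definition is_clique (T : finType) (e : rel T) (K : {set T}) : bool :=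
  [forall x in K, forall y in K, (x != y) ==> e x y].

Definition is_max_clique (T : finType) (e : rel T) (K : {set T}) : bool :=
  is_clique e K && [forall K' : {set T}, (is_clique e K' && (K \subset K')) ==> (K' == K)].

Definition facet_edge (T : finType) (e : rel T) (x y : T) : Prop :=
  e x y /\ is_max_clique e [set x; y].

Definition exposed_edge (T : finType) (e : rel T) (x y : T) : Prop :=
  e x y /\
  (exists! K : {set T}, is_max_clique e K /\ [set x; y] \subset K) /\
  ~ facet_edge e x y.

From mathcomp Require Import all_boot.

Set Implicit Arguments.
Unset Strict Implicit.
Unset Printing Implicit Defensive.

(* Every clique containing the edge vw lies in {v, w} together with the common
   neighbourhood C of v and w.  Hence, when C is a clique, {v, w} :|: C is the
   unique maximal clique through vw; conversely, if vw lies in a unique maximal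
   clique, then extending {v, w, x} for each x in C shows that C lies inside it.
   Finally, vw is a facet edge exactly when C is empty. *)

Section CliqueThroughEdge.

Variables (T : finType) (e : rel T).

Definition common_nbhd (v w : T) : {set T} := nbhd e v :&: nbhd e w.

Lemma in_common_nbhd v w x : (x \in common_nbhd v w) = e v x && e w x.
Proof. by rewrite !inE. Qed.

Lemma cliqueP (K : {set T}) :
  reflect (forall x y, x \in K -> y \in K -> x != y -> e x y) (is_clique e K).
Proof.
apply: (iffP forallP) => [cK x y xK yK | cK x].
  by have /forall_inP/(_ y yK)/implyP := implyP (cK x) xK.
by apply/implyP => xK; apply/forall_inP => y yK; apply/implyP; apply: cK.
Qed.

Lemma clique_subset (K K' : {set T}) :
  K' \subset K -> is_clique e K -> is_clique e K'.
Proof.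
move=> /subsetP sK'K /cliqueP cK; apply/cliqueP => x y xK' yK'.
exact: cK (sK'K x xK') (sK'K y yK').
Qed.

Lemma max_cliqueP (K : {set T}) :
  reflect (is_clique e K /\
           forall K', is_clique e K' -> K \subset K' -> K' = K)
          (is_max_clique e K).
Proof.
apply: (iffP andP) => -[cK maxK]; split=> //.
  by move=> K' cK' sKK'; apply/eqP; have /implyP := forallP maxK K'; apply; rewrite cK'.
by apply/forallP => K'; apply/implyP => /andP[cK' sKK']; rewrite (maxK K' cK' sKK').
Qed.

Lemma exists_max_clique_superset (K0 : {set T}) :
  is_clique e K0 -> exists2 K, is_max_clique e K & K0 \subset K.
Proof.
move=> cK0.
pose P := [pred K : {set T} | is_clique e K && (K0 \subset K)].
have PK0 : P K0 by rewrite /= cK0 subxx.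
case: (arg_maxnP (fun K : {set T} => #|K|) PK0) => K /andP[cK sK0K] maxK.
exists K => //; apply/max_cliqueP; split=> // K' cK' sKK'.
have leK'K := maxK K'; rewrite /= cK' (subset_trans sK0K sKK') in leK'K.
by apply/eqP; rewrite eq_sym eqEcard sKK' leK'K.
Qed.

Hypotheses (e_sym : symmetric e) (e_irr : irreflexive e).

Variables (v w : T).
Hypothesis evw : e v w.

Let C := common_nbhd v w.

Lemma edge_notin_common_nbhd : (v \notin C) && (w \notin C).
Proof. by rewrite !in_common_nbhd e_irr (e_sym w) e_irr andbF. Qed.

Lemma clique_edge_subset (K : {set T}) :
  is_clique e K -> [set v; w] \subset K -> K \subset [set v; w] :|: C.
Proof.
move=> /cliqueP cK /subsetP svwK; apply/subsetP => x xK.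
have vK : v \in K by apply: svwK; rewrite !inE eqxx.
have wK : w \in K by apply: svwK; rewrite !inE eqxx orbT.
rewrite !inE; have [//|xv] := eqVneq x v; have [//|xw] := eqVneq x w.
by rewrite !(cK _ x) // eq_sym.
Qed.

Lemma clique_edgeU (S : {set T}) :
  S \subset C -> is_clique e S -> is_clique e ([set v; w] :|: S).
Proof.
move=> /subsetP sSC /cliqueP cS; apply/cliqueP => x y.
have ev u : u \in S -> e v u by move/sSC; rewrite in_common_nbhd => /andP[].
have ew u : u \in S -> e w u by move/sSC; rewrite in_common_nbhd => /andP[].
rewrite !inE -!orbA => /or3P[/eqP->|/eqP->|xS] /or3P[/eqP->|/eqP->|yS];
  rewrite ?eqxx // => nxy; last exact: cS.
all: first [exact: ev | exact: ew | rewrite e_sym; first [done | exact: ev | exact: ew]].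
Qed.

Lemma max_clique_edgeU :
  is_clique e C -> is_max_clique e ([set v; w] :|: C).
Proof.
move=> cC; apply/max_cliqueP; split; first exact: clique_edgeU.
move=> K cK sK0K; apply/eqP; rewrite eqEsubset sK0K andbT.
by apply: clique_edge_subset; rewrite // (subset_trans (subsetUl _ _) sK0K).
Qed.

Lemma max_clique_edge_uniq (K : {set T}) :
  is_clique e C -> is_max_clique e K -> [set v; w] \subset K ->
  K = [set v; w] :|: C.
Proof.
move=> cC /max_cliqueP[cK maxK] svwK.
by apply/esym; apply: maxK; [exact: clique_edgeU | exact: clique_edge_subset].
Qed.

Lemma common_nbhd_sub_max_clique (K0 : {set T}) :
  (forall K, is_max_clique e K -> [set v; w] \subset K -> K = K0) ->
  C \subset K0.
Proof.
move=> uniqK0; apply/subsetP => x xC.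
have cvwx : is_clique e ([set v; w] :|: [set x]).
  apply: clique_edgeU; first by rewrite sub1set.
  by apply/cliqueP => ? ? /set1P-> /set1P->; rewrite eqxx.
have [K maxK svwxK] := exists_max_clique_superset cvwx.
rewrite -(uniqK0 K maxK); last by rewrite (subset_trans (subsetUl _ _) svwxK).
by apply: (subsetP svwxK); rewrite !inE eqxx orbT.
Qed.

Lemma facet_edge_common_nbhd0 : facet_edge e v w <-> C = set0.
Proof.
split=> [[_ maxvw] | C0].
  have svw : C \subset [set v; w].
    apply: common_nbhd_sub_max_clique => K maxK svwK.
    by case/max_cliqueP: maxvw => _; apply=> //; case/max_cliqueP: maxK.
  apply: contraTeq edge_notin_common_nbhd => /set0Pn-[x xC].
  by have [] := set2P (subsetP svw x xC) => xE; rewrite -xE xC ?andbF.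
split=> //; rewrite -[[set v; w]]setU0 -C0.
by apply: max_clique_edgeU; rewrite C0; apply/cliqueP => ? ?; rewrite inE.
Qed.

End CliqueThroughEdge.

Theorem lemma2p7 (T : finType) (e : rel T) (v w : T) :
  simple_graph e -> e v w ->
  (exposed_edge e v w <->
   (nbhd e v :&: nbhd e w != set0 /\ is_clique e (nbhd e v :&: nbhd e w))).
Proof.
move=> [e_sym e_irr] evw; rewrite -/(common_nbhd e v w).
have facetE := facet_edge_common_nbhd0 e_sym e_irr evw.
split=> [[_ [[K0 [[maxK0 _] uniqK0]] notfacet]] | [C_neq0 cC]].
  split; first by apply/eqP => /facetE.
  apply: (clique_subset (common_nbhd_sub_max_clique e_sym evw _)).
    by move=> K maxK svwK; apply/esym/uniqK0.
  by case/max_cliqueP: maxK0.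
split=> //; split; last by move/facetE; apply/eqP.
exists ([set v; w] :|: common_nbhd e v w); split.
  by split; [exact: max_clique_edgeU | exact: subsetUl].
by move=> K [maxK svwK]; rewrite (max_clique_edge_uniq e_sym evw cC maxK svwK).
Qed.
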